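(* Let $k\ge1$ be odd and, with $S,T,T_\omega=\begin{psmallmatrix}1&i\\0&1\end{psmallmatrix},L=\begin{psmallmatrix}i&0\\0&-i\end{psmallmatrix},U=TS,E=T_\omega SL$, let $W_{k,k}=\ker(\mathbf{1}+S)\cap\ker(\mathbf{1}-L)\cap\ker(\mathbf{1}+U+U^2)\cap\ker(\mathbf{1}+E+E^2)\subset V_{k,k}$. Let $\varepsilon_1=\begin{psmallmatrix}i&0\\0&1\end{psmallmatrix}$, so $P|\varepsilon_1=P(iz,\bar i\bar z)$. Then $W_{k,k}|\varepsilon_1=W_{k,k}$, and consequently $$W_{k,k}=W_{k,k}^{1}\oplus W_{k,k}^{-1}\oplus W_{k,k}^{i}\oplus W_{k,k}^{-i},$$ where $W_{k,k}^e=W_{k,k}\cap V_{k,k}^e$ and $V_{k,k}^e=\{P\in V_{k,k}:P(iz,\bar i\bar z)=eP(z,\bar z)\}$ for $e\in\{\pm1,\pm i\}$.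
   Context: $S=\begin{psmallmatrix}0&-1\\1&0\end{psmallmatrix}$, $T=\begin{psmallmatrix}1&1\\0&1\end{psmallmatrix}$. $V_{k,k}$ is the space of polynomials $\sum_{0\le i,j\le k}c_{ij}z^i\bar z^j$ over $\mathbb{C}$ with right action $(P|\gamma)(z,\bar z)=(cz+e)^k\overline{(cz+e)}^kP\!\left(\frac{az+b}{cz+e},\frac{\bar a\bar z+\bar b}{\bar c\bar z+\bar e}\right)$ for $\gamma=\begin{psmallmatrix}a&b\\c&e\end{psmallmatrix}$, extended linearly to the group ring; $\ker(X)=\{P:P|X=0\}$, and $W|\varepsilon_1=\{P|\varepsilon_1:P\in W\}$. *)

From HB Require Import structures.
From mathcomp Require Import all_boot all_order all_algebra.
Set Implicit Arguments. Unset Strict Implicit. Unset Printing Implicit Defensive.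
Import Order.TTheory GRing.Theory Num.Theory Num.Def.
Local Open Scope ring_scope.

(* The complex field is modelled by an arbitrary numClosedFieldType C
   (which has 'i and complex conjugation z^* ); C = ℂ is an instance. *)

Section Defs.
Variable C : numClosedFieldType.

Definition mx2 (a b c e : C) : 'M[C]_2 :=
  \matrix_(i < 2, j < 2)
    if i == ord0 then (if j == ord0 then a else b) else (if j == ord0 then c else e).

(* An element of V_{k,k}: P(z, zbar) = \sum_{i,j <= k} P i j z^i zbar^j,
   represented by its coefficient matrix. *)
Definition Vkk (k : nat) := 'M[C]_(k.+1).

Definition hpoly (k : nat) (a b c e : C) (i : nat) : {poly C} :=
  ('X * a%:P + b%:P) ^+ i * ('X * c%:P + e%:P) ^+ (k - i).

(* Right action: (P|g)(z,zbar) = (cz+e)^k conj(cz+e)^k P(gz, conj(g) zbar),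
   i.e. \sum_{i,j} P_ij (az+b)^i (cz+e)^(k-i) (a^* zbar+b^* )^j (c^* zbar+e^* )^(k-j),
   expanded in the monomials z^p zbar^q. *)
Definition slash (k : nat) (P : Vkk k) (g : 'M[C]_2) : Vkk k :=
  let a := g ord0 ord0 in let b := g ord0 ord_max in
  let c := g ord_max ord0 in let e := g ord_max ord_max in
  \matrix_(p < k.+1, q < k.+1)
    \sum_(i < k.+1) \sum_(j < k.+1)
      P i j * (hpoly k a b c e i)`_p * (hpoly k a^* b^* c^* e^* j)`_q.

(* Group ring elements: finite formal combinations \sum_t t.1 [t.2]. *)
Definition slashG (k : nat) (P : Vkk k) (X : seq (C * 'M[C]_2)) : Vkk k :=
  \sum_(t <- X) t.1 *: slash P t.2.

Definition kerG (k : nat) (X : seq (C * 'M[C]_2)) (P : Vkk k) : Prop :=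
  slashG P X = 0.

Definition one2 : 'M[C]_2 := 1%:M.
Definition Smx : 'M[C]_2 := mx2 0 (-1) 1 0.
Definition Tmx : 'M[C]_2 := mx2 1 1 0 1.
Definition Tw : 'M[C]_2 := mx2 1 'i 0 1.
Definition Lmx : 'M[C]_2 := mx2 'i 0 0 (- 'i).
Definition Umx : 'M[C]_2 := Tmx *m Smx.
Definition Emx : 'M[C]_2 := Tw *m Smx *m Lmx.
Definition eps1 : 'M[C]_2 := mx2 'i 0 0 1.

Definition Wkk (k : nat) (P : Vkk k) : Prop :=
  [/\ kerG [:: (1, one2); (1, Smx)] P,
      kerG [:: (1, one2); (-1, Lmx)] P,
      kerG [:: (1, one2); (1, Umx); (1, Umx *m Umx)] P &
      kerG [:: (1, one2); (1, Emx); (1, Emx *m Emx)] P].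

Definition subst_eps (k : nat) (P : Vkk k) : Vkk k :=
  \matrix_(p < k.+1, q < k.+1) ('i ^+ p * ('i^*) ^+ q * P p q).

Definition Vkk_e (k : nat) (e : C) (P : Vkk k) : Prop := subst_eps P = e *: P.
Definition Wkk_e (k : nat) (e : C) (P : Vkk k) : Prop := Wkk P /\ Vkk_e e P.

End Defs.

(* The slash action factors as P|g = H(g)^T P H(conj g), where row i of H(g) lists the
   coefficients of (az+b)^i (cz+e)^(k-i); H is multiplicative, so this is a right action.
   Conjugation by eps1 sends S, L, U, U^2, E, E^2 to words that end in eps1 and otherwise
   only involve S, L, U, E, where L fixes W and S acts on W by -1; hence each relation
   defining W|eps1 is a relation of W followed by eps1, and W|eps1 lies in W.  On
   coefficients, |eps1 multiplies the (p,q) entry by i^p (-i)^q, so it has order 4 and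
   W is the direct sum of its eigenspaces, cut out by the projections
   (1/4) sum_r e^(-r) eps1^r. *)

From HB Require Import structures.
From mathcomp Require Import all_boot all_order all_algebra.
From mathcomp Require Import ring zify.
Set Implicit Arguments. Unset Strict Implicit. Unset Printing Implicit Defensive.
Import Order.TTheory GRing.Theory Num.Theory Num.Def.
Local Open Scope ring_scope.

Section Homogenization.
Variable R : comNzRingType.
Implicit Types (f A B : {poly R}) (a b : R).

Definition lin a b : {poly R} := 'X * a%:P + b%:P.

(* For size f <= m.+1, [homog m f A B] is B^m f(A/B). *)
Definition homog (m : nat) f A B : {poly R} :=
  \sum_(r < m.+1) f`_r *: (A ^+ r * B ^+ (m - r)).

Lemma homogD m f g A B : homog m (f + g) A B = homog m f A B + homog m g A B.
Proof. by rewrite /homog -big_split; apply: eq_bigr => r _; rewrite coefD scalerDl. Qed.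

Lemma homogZ m x f A B : homog m (x *: f) A B = x *: homog m f A B.
Proof. by rewrite /homog scaler_sumr; apply: eq_bigr => r _; rewrite coefZ scalerA. Qed.

Lemma homogXM m f A B : homog m.+1 ('X * f) A B = A * homog m f A B.
Proof.
rewrite /homog big_ord_recl coefXM eqxx scale0r add0r mulr_sumr.
by apply: eq_bigr => r _; rewrite coefXM /= subSS exprS -mulrA scalerAr.
Qed.

Lemma homogS m f A B : (size f <= m.+1)%N -> homog m.+1 f A B = B * homog m f A B.
Proof.
move=> sf; rewrite /homog big_ord_recr /= nth_default // scale0r addr0 mulr_sumr.
apply: eq_bigr => r _; rewrite subSn; last by rewrite -ltnS.
by rewrite exprS mulrCA scalerAr.
Qed.

Lemma homog0 A B : homog 0 1 A B = 1.
Proof. by rewrite /homog big_ord1 coefC scale1r !expr0 mulr1. Qed.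

Lemma size_linM a b f : (size (lin a b * f)%R <= (size f).+1)%N.
Proof.
have slin : (size (lin a b) <= 2)%N.
  by rewrite /lin mulrC size_MXaddC; case: ifP => // _; rewrite ltnS size_polyC leq_b1.
apply: leq_trans (size_polyMleq (lin a b) f) _; lia.
Qed.

Lemma homog_linM n f a b A B : (size f <= n.+1)%N ->
  homog n.+1 (lin a b * f) A B = (a%:P * A + b%:P * B) * homog n f A B.
Proof.
move=> sf; have -> : lin a b * f = a *: ('X * f) + b *: f.
  by rewrite /lin -!mul_polyC; ring.
by rewrite homogD !homogZ homogXM homogS // -!mul_polyC; ring.
Qed.

Lemma size_linXM i a b f : (size (lin a b ^+ i * f)%R <= size f + i)%N.
Proof.
elim: i => [|i IHi]; first by rewrite expr0 mul1r addn0.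
by rewrite exprS -mulrA addnS; apply: leq_trans (size_linM _ _ _) _.
Qed.

Lemma homog_linXM i n f a b A B : (size f <= n.+1)%N ->
  homog (i + n) (lin a b ^+ i * f) A B = (a%:P * A + b%:P * B) ^+ i * homog n f A B.
Proof.
move=> sf; elim: i => [|i IHi]; first by rewrite expr0 !mul1r.
rewrite addSn exprS -mulrA homog_linM ?IHi ?mulrA -?exprS //.
by apply: leq_trans (size_linXM _ _ _ _) _; lia.
Qed.

Lemma homog_lin_prod m i a b c e A B : (i <= m)%N ->
  homog m (lin a b ^+ i * lin c e ^+ (m - i)) A B =
  (a%:P * A + b%:P * B) ^+ i * (c%:P * A + e%:P * B) ^+ (m - i).
Proof.
move=> im; have homog_ce : homog (m - i) (lin c e ^+ (m - i)) A B =
    (c%:P * A + e%:P * B) ^+ (m - i).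
  have := @homog_linXM (m - i) 0 1 c e A B.
  by rewrite addn0 !mulr1 homog0 mulr1 size_poly1; apply.
have size_ce : (size (lin c e ^+ (m - i)) <= (m - i).+1)%N.
  by have := size_linXM (m - i) c e 1; rewrite mulr1 size_poly1.
by rewrite -[X in homog X _ _ _](subnKC im) homog_linXM // homog_ce.
Qed.

Lemma lin_comb a b a' b' c' e' :
  a%:P * lin a' b' + b%:P * lin c' e' = lin (a * a' + b * c') (a * b' + b * e').
Proof. by rewrite /lin !polyCD !polyCM; ring. Qed.

End Homogenization.

Lemma addrACA4 (V : zmodType) (a b c d a' b' c' d' : V) :
  a + a' + (b + b') + (c + c') + (d + d') = a + b + c + d + (a' + b' + c' + d').
Proof. by rewrite [a + a' + _]addrACA [_ + (c + c')]addrACA [_ + (d + d')]addrACA. Qed.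

Section OrderFourOperator.
Variables (F : fieldType) (V : lmodType F) (sigma : {linear V -> V}) (j : F).
Hypotheses (sigma4 : forall v, sigma (sigma (sigma (sigma v))) = v)
  (sqr_j : j ^+ 2 = -1) (two_neq0 : (2 : F) != 0).

Definition comb4 (c0 c1 c2 c3 : F) (v : V) : V :=
  c0 *: v + c1 *: sigma v + c2 *: sigma (sigma v) + c3 *: sigma (sigma (sigma v)).

(* For e^4 = 1 we have e^(-r) = e^(4-r). *)
Definition eigenproj (e : F) : V -> V :=
  comb4 4^-1 (4^-1 * e ^+ 3) (4^-1 * e ^+ 2) (4^-1 * e).

Lemma comb4D c0 c1 c2 c3 u v :
  comb4 c0 c1 c2 c3 (u + v) = comb4 c0 c1 c2 c3 u + comb4 c0 c1 c2 c3 v.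
Proof. by rewrite /comb4 !(linearD sigma) !scalerDr addrACA4. Qed.

Lemma comb4_0 c0 c1 c2 c3 : comb4 c0 c1 c2 c3 0 = 0.
Proof. by rewrite /comb4 !(linear0 sigma) !scaler0 !addr0. Qed.

Lemma comb4_add c0 c1 c2 c3 d0 d1 d2 d3 v :
  comb4 c0 c1 c2 c3 v + comb4 d0 d1 d2 d3 v =
  comb4 (c0 + d0) (c1 + d1) (c2 + d2) (c3 + d3) v.
Proof. by rewrite /comb4 !scalerDl addrACA4. Qed.

Lemma scale_comb4 x c0 c1 c2 c3 v :
  x *: comb4 c0 c1 c2 c3 v = comb4 (x * c0) (x * c1) (x * c2) (x * c3) v.
Proof. by rewrite /comb4 !scalerDr !scalerA. Qed.

Lemma sigma_comb4 c0 c1 c2 c3 v : sigma (comb4 c0 c1 c2 c3 v) = comb4 c3 c0 c1 c2 v.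
Proof. by rewrite /comb4 !(linearD sigma) !(linearZZ sigma) sigma4 addrC !addrA. Qed.

Lemma comb4_eigen c0 c1 c2 c3 l u : sigma u = l *: u ->
  comb4 c0 c1 c2 c3 u = (c0 + c1 * l + c2 * l ^+ 2 + c3 * l ^+ 3) *: u.
Proof.
move=> su; have s2 : sigma (sigma u) = l ^+ 2 *: u by rewrite su (linearZZ sigma) su scalerA.
have s3 : sigma (sigma (sigma u)) = l ^+ 3 *: u by rewrite s2 (linearZZ sigma) su scalerA -exprSr.
by rewrite /comb4 s3 s2 su !scalerA !scalerDl.
Qed.

Let four_neq0 : (4 : F) != 0.
Proof. by rewrite (_ : 4 = 2 * 2) ?mulf_neq0 // -natrM. Qed.

Lemma eigenprojP e v : e ^+ 4 = 1 -> sigma (eigenproj e v) = e *: eigenproj e v.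
Proof. by move=> e4; rewrite sigma_comb4 scale_comb4; congr comb4; ring: e4. Qed.

Lemma eigenproj_eigen e l u : e ^+ 4 = 1 -> l ^+ 4 = 1 -> sigma u = l *: u ->
  eigenproj e u = (e == l)%:R *: u.
Proof.
move=> e4 l4 su; rewrite /eigenproj (comb4_eigen _ _ _ _ su); congr (_ *: u).
have [<-|neq_el] := eqVneq e l; first by rewrite mulr1n; field: e4.
(* x = e^3 l is a fourth root of unity other than 1, so 1 + x + x^2 + x^3 = 0. *)
have e3l_neq1 : 1 - e ^+ 3 * l != 0.
  rewrite subr_eq0; apply: contraNneq neq_el => e3l.
  by rewrite -[e]mulr1 e3l mulrA -exprS e4 mul1r.
have : (1 - e ^+ 3 * l) * (1 + e ^+ 3 * l + e ^+ 2 * l ^+ 2 + e * l ^+ 3) = 0.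
  by ring: e4 l4.
move/eqP; rewrite mulf_eq0 (negPf e3l_neq1) /= => /eqP geom0.
by rewrite mulr0n -(mulr0 4^-1) -geom0; ring.
Qed.

Lemma fourth_roots_exp4 :
  [/\ (1 : F) ^+ 4 = 1, (-1 : F) ^+ 4 = 1, j ^+ 4 = 1 & (- j) ^+ 4 = 1].
Proof. by split; ring: sqr_j. Qed.

Lemma uniq_fourth_roots : uniq [:: 1; -1; j; - j].
Proof.
have N1 : (1 : F) != -1 by rewrite -subr_eq0 opprK.
have j_neq1 : j != 1 by apply: contra_neq N1 => j1; rewrite -sqr_j j1 expr1n.
have j_neqN1 : j != -1 by apply: contra_neq N1 => j1; rewrite -sqr_j j1 sqrrN expr1n.
have j_neqNj : j != - j.
  by apply: contra_neq N1 => jNj; rewrite -sqr_j expr2 {2}jNj mulrN -expr2 sqr_j opprK.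
rewrite /= !inE !negb_or N1 j_neqNj eqr_opp !(eq_sym _ j) !(eq_sym _ (- j)).
by rewrite eqr_oppLR j_neq1 j_neqN1.
Qed.

Lemma eigenproj_sum v :
  eigenproj 1 v + eigenproj (-1) v + eigenproj j v + eigenproj (- j) v = v.
Proof.
rewrite /eigenproj !comb4_add; transitivity (comb4 1 0 0 0 v).
  by congr comb4; field: sqr_j.
by rewrite /comb4 !scale0r !addr0 scale1r.
Qed.

Lemma eigen_decomposition_unique a b c d :
  sigma a = 1 *: a -> sigma b = -1 *: b -> sigma c = j *: c -> sigma d = - j *: d ->
  a + b + c + d = 0 -> [/\ a = 0, b = 0, c = 0 & d = 0].
Proof.
move=> sa sb sc sd abcd0; have [r1 r2 r3 r4] := fourth_roots_exp4.
have coord e : e ^+ 4 = 1 ->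
    (e == 1)%:R *: a + (e == -1)%:R *: b + (e == j)%:R *: c + (e == - j)%:R *: d = 0.
  move=> e4; rewrite -(eigenproj_eigen e4 r1 sa) -(eigenproj_eigen e4 r2 sb).
  rewrite -(eigenproj_eigen e4 r3 sc) -(eigenproj_eigen e4 r4 sd).
  by rewrite /eigenproj -!comb4D abcd0 comb4_0.
have neqE x y : x != y -> (x == y) = false /\ (y == x) = false.
  by rewrite eq_sym => /negPf ->.
have := uniq_fourth_roots; rewrite /= !inE !negb_or.
case/and4P=> /and3P[/neqE[f12 f21] /neqE[f13 f31] /neqE[f14 f41]].
case/andP=> /neqE[f23 f32] /neqE[f24 f42] /neqE[f34 f43] _.
split; [move: (coord _ r1) | move: (coord _ r2) | move: (coord _ r3) | move: (coord _ r4)];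
  rewrite eqxx ?(f12, f21, f13, f31, f14, f41, f23, f32, f24, f42, f34, f43);
  by rewrite mulr1n !mulr0n scale1r !scale0r ?add0r ?addr0.
Qed.

Section Stable.
Variable W : V -> Prop.
Hypotheses (W_add : forall u v, W u -> W v -> W (u + v))
  (W_scale : forall x v, W v -> W (x *: v)) (W_sigma : forall v, W v -> W (sigma v)).

Lemma W_comb4 c0 c1 c2 c3 v : W v -> W (comb4 c0 c1 c2 c3 v).
Proof.
by rewrite /comb4 => Wv; repeat apply: W_add; apply: W_scale; do ?apply: W_sigma.
Qed.

Lemma eigen_decomposition v : W v -> exists a b c d,
  [/\ W a /\ sigma a = 1 *: a, W b /\ sigma b = -1 *: b, W c /\ sigma c = j *: c,
      W d /\ sigma d = - j *: d & v = a + b + c + d].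
Proof.
move=> Wv; have [r1 r2 r3 r4] := fourth_roots_exp4.
exists (eigenproj 1 v), (eigenproj (-1) v), (eigenproj j v), (eigenproj (- j) v).
split; last by rewrite eigenproj_sum.
all: by split; [exact: W_comb4 | exact: eigenprojP].
Qed.

Lemma sigma_onto_stable v : W v -> exists2 u, W u & sigma u = v.
Proof.
by move=> Wv; exists (sigma (sigma (sigma v))); [do 3 apply: W_sigma | exact: sigma4].
Qed.

End Stable.

End OrderFourOperator.

Lemma mulmx2E (R : pzRingType) (g h : 'M[R]_2) i j :
  (g *m h) i j = g i ord0 * h ord0 j + g i ord_max * h ord_max j.
Proof.
rewrite mxE big_ord_recr big_ord_recr big_ord0 /= add0r.
by congr (g i _ * h _ j + _); apply/val_inj.
Qed.

Section SymmetricPower.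
Variables (C : numClosedFieldType) (k : nat).
Implicit Types (g h : 'M[C]_2) (P : Vkk C k).

Lemma hpolyE (a b c e : C) i : hpoly k a b c e i = lin a b ^+ i * lin c e ^+ (k - i).
Proof. by []. Qed.

Definition sym_poly g (i : nat) : {poly C} :=
  hpoly k (g ord0 ord0) (g ord0 ord_max) (g ord_max ord0) (g ord_max ord_max) i.

Definition sym_mx g : 'M[C]_k.+1 := \matrix_(i, p) (sym_poly g i)`_p.

Lemma sym_polyM g h (i : 'I_k.+1) : sym_poly (g *m h) i =
  homog k (sym_poly g i) (lin (h ord0 ord0) (h ord0 ord_max))
    (lin (h ord_max ord0) (h ord_max ord_max)).
Proof. by rewrite /sym_poly !hpolyE homog_lin_prod ?lin_comb ?mulmx2E // -ltnS. Qed.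

Lemma sym_mxM g h : sym_mx (g *m h) = sym_mx g *m sym_mx h.
Proof.
apply/matrixP => i p; rewrite !mxE sym_polyM /homog coef_sum.
by apply: eq_bigr => r _; rewrite !mxE coefZ.
Qed.

Lemma slash_sym_mx P g :
  slash P g = (sym_mx g)^T *m P *m sym_mx (map_mx conjC g).
Proof.
apply/matrixP => p q; rewrite !mxE exchange_big; apply: eq_bigr => j _.
rewrite !mxE mulr_suml; apply: eq_bigr => i _; rewrite /sym_poly !mxE; ring.
Qed.

Lemma slashA P g h : slash (slash P g) h = slash P (g *m h).
Proof. by rewrite !slash_sym_mx map_mxM !sym_mxM trmx_mul !mulmxA. Qed.

Lemma slashD P Q g : slash (P + Q) g = slash P g + slash Q g.
Proof. by rewrite !slash_sym_mx mulmxDr mulmxDl. Qed.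

Lemma slashZ x P g : slash (x *: P) g = x *: slash P g.
Proof. by rewrite !slash_sym_mx -scalemxAr -scalemxAl. Qed.

Lemma sym_mx_diag x : sym_mx (mx2 x 0 0 1) = diag_mx (\row_(i < k.+1) x ^+ i).
Proof.
apply/matrixP => i p; rewrite !mxE /sym_poly /hpoly !mxE /=.
rewrite polyC0 polyC1 mulr0 add0r addr0 expr1n mulr1 exprMn -rmorphXn coefMC coefXn.
by rewrite mulrC eq_sym mulr_natr.
Qed.

Lemma map_mx2 (f : C -> C) a b c e :
  map_mx f (mx2 a b c e) = mx2 (f a) (f b) (f c) (f e).
Proof. by apply/matrixP => i j; rewrite !mxE; case: (i == ord0); case: (j == ord0). Qed.

Lemma slash_diag x P :
  slash P (mx2 x 0 0 1) = \matrix_(p, q) (x ^+ p * x^* ^+ q * P p q).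
Proof.
rewrite slash_sym_mx map_mx2 rmorph0 rmorph1 !sym_mx_diag tr_diag_mx.
by rewrite mul_diag_mx mul_mx_diag; apply/matrixP => p q; rewrite !mxE mulrAC.
Qed.

Lemma slash1 P : slash P (one2 C) = P.
Proof.
have -> : one2 C = mx2 1 0 0 1.
  by apply/matrixP => i j; rewrite !mxE; case: i j => [[|[|]]] // ? [[|[|]]].
by rewrite slash_diag rmorph1; apply/matrixP => p q; rewrite !mxE !expr1n !mul1r.
Qed.

Lemma subst_eps_slash P : subst_eps P = slash P (eps1 C).
Proof. by rewrite slash_diag. Qed.

End SymmetricPower.

Section Invariance.
Variables (C : numClosedFieldType) (k : nat).
Implicit Types (P : Vkk C k).

Local Notation S := (Smx C).
Local Notation L := (Lmx C).
Local Notation U := (Umx C).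
Local Notation E := (Emx C).
Local Notation eps := (eps1 C).

Lemma mx2_mul (a b c e a' b' c' e' : C) :
  mx2 a b c e *m mx2 a' b' c' e' =
  mx2 (a * a' + b * c') (a * b' + b * e') (c * a' + e * c') (c * b' + e * e').
Proof.
by apply/matrixP => i j; rewrite mulmx2E !mxE /=; case: (i == ord0); case: (j == ord0).
Qed.

Ltac mx2_ring :=
  rewrite /eps1 /Smx /Lmx /Umx /Emx /Tmx /Tw !mx2_mul; congr mx2; ring: (sqrCi C).

Lemma eps1_S : eps *m S = L *m (S *m eps). Proof. mx2_ring. Qed.
Lemma eps1_L : eps *m L = L *m eps. Proof. mx2_ring. Qed.
Lemma eps1_U : eps *m U = L *m (L *m (E *m eps)). Proof. mx2_ring. Qed.
Lemma eps1_U2 : eps *m (U *m U) = E *m E *m eps. Proof. mx2_ring. Qed.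
Lemma eps1_E : eps *m E = L *m (L *m (S *m (U *m U *m (S *m eps)))).
Proof. mx2_ring. Qed.
Lemma eps1_E2 : eps *m (E *m E) = S *m (U *m (S *m eps)). Proof. mx2_ring. Qed.

Lemma slashN P g : slash (- P) g = - slash P g.
Proof. by rewrite -scaleN1r slashZ scaleN1r. Qed.

Lemma slash0 g : slash (0 : Vkk C k) g = 0.
Proof. by rewrite slash_sym_mx mulmx0 mul0mx. Qed.

Lemma WkkE P : Wkk P <->
  [/\ slash P S = - P, slash P L = P,
      P + slash P U + slash P (U *m U) = 0 & P + slash P E + slash P (E *m E) = 0].
Proof.
rewrite /Wkk /kerG /slashG !big_cons !big_nil /= !addr0 !scale1r scaleN1r !slash1 !addrA.
have addr_eq0P X : P + X = 0 <-> X = - P.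
  by split => [/eqP|->]; rewrite ?addrN // addrC addr_eq0 => /eqP.
have subr_eq0P X : P - X = 0 <-> X = P.
  by split => [/eqP|->]; rewrite ?subrr // subr_eq0 eq_sym => /eqP.
split=> [[/addr_eq0P hS /subr_eq0P hL hU hE] | [hS hL hU hE]]; split => //.
  exact/addr_eq0P.
exact/subr_eq0P.
Qed.

Lemma Wkk_slash_eps1 P : Wkk P -> Wkk (slash P eps).
Proof.
case/WkkE=> hS hL hU hE.
have actL g : slash P (L *m g) = slash P g by rewrite -slashA hL.
have actS g : slash P (S *m g) = - slash P g by rewrite -slashA hS slashN.
apply/WkkE; split; rewrite !slashA.
- by rewrite eps1_S actL actS.
- by rewrite eps1_L actL.
- rewrite eps1_U eps1_U2 !actL -(slashA P E) -(slashA P (E *m E)).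
  by rewrite -!slashD hE slash0.
- have hUS : slash P (U *m U *m (S *m eps)) + slash P (U *m (S *m eps)) = slash P eps.
    rewrite -(slashA P (U *m U)) -(slashA P U (S *m eps)) -slashD -slashA.
    have -> : slash P (U *m U) + slash P U = - P.
      by apply: (addrI P); rewrite addrN -hU addrA addrAC.
    by rewrite slashN hS opprK.
  by rewrite eps1_E eps1_E2 !actL !actS -addrA -opprD hUS subrr.
Qed.

End Invariance.

Section Eigenspaces.
Variables (C : numClosedFieldType) (k : nat).
Implicit Types (P Q : Vkk C k) (X : seq (C * 'M[C]_2)).

Lemma subst_eps_is_linear : linear (@subst_eps C k).
Proof. by move=> a P Q; apply/matrixP => p q; rewrite !mxE; ring. Qed.

HB.instance Definition _ :=
  GRing.isLinear.Build C (Vkk C k) (Vkk C k) _ (@subst_eps C k) subst_eps_is_linear.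

Lemma subst_eps4 P : subst_eps (subst_eps (subst_eps (subst_eps P))) = P.
Proof.
apply/matrixP => p q; rewrite !mxE.
have w4 : ('i ^+ p * 'i^* ^+ q) ^+ 4 = 1 :> C.
  have i4 (x : C) : x ^+ 2 = -1 -> x ^+ 4 = 1.
    by move=> x2; rewrite (exprM x 2 2) x2 sqrrN expr1n.
  rewrite exprMn !(exprAC _ _ 4) i4 ?i4 ?expr1n ?mulr1 ?sqrCi //.
  by rewrite conjCi sqrrN sqrCi.
by move: ('i ^+ p * _) w4 => w w4; ring: w4.
Qed.

Lemma slashGD P Q X : slashG (P + Q) X = slashG P X + slashG Q X.
Proof. by rewrite /slashG -big_split; apply: eq_bigr => t _; rewrite slashD scalerDr. Qed.

Lemma slashGZ x P X : slashG (x *: P) X = x *: slashG P X.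
Proof.
by rewrite /slashG scaler_sumr; apply: eq_bigr => t _; rewrite slashZ !scalerA mulrC.
Qed.

Lemma kerGD X P Q : kerG X P -> kerG X Q -> kerG X (P + Q).
Proof. by rewrite /kerG slashGD => -> ->; rewrite addr0. Qed.

Lemma kerGZ X x P : kerG X P -> kerG X (x *: P).
Proof. by rewrite /kerG slashGZ => ->; rewrite scaler0. Qed.

Lemma WkkD P Q : Wkk P -> Wkk Q -> Wkk (P + Q).
Proof. by case=> ? ? ? ? [? ? ? ?]; split; apply: kerGD. Qed.

Lemma WkkZ x P : Wkk P -> Wkk (x *: P).
Proof. by case=> ? ? ? ?; split; apply: kerGZ. Qed.

Lemma Wkk_subst_eps P : Wkk P -> Wkk (subst_eps P).
Proof. by rewrite subst_eps_slash; apply: Wkk_slash_eps1. Qed.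

End Eigenspaces.

Unset Implicit Arguments.
Theorem proposition5p2 (C : numClosedFieldType) (k : nat) (hk : odd k) :
  (* W_{k,k} | eps1 = W_{k,k} *)
  ((forall P : Vkk C k, Wkk P -> Wkk (slash P (eps1 C))) /\
   (forall Q : Vkk C k, Wkk Q -> exists2 P : Vkk C k, Wkk P & slash P (eps1 C) = Q))
  /\
  (* W = W^1 ⊕ W^{-1} ⊕ W^i ⊕ W^{-i} *)
  ((forall P : Vkk C k, Wkk P ->
      exists P1 P2 P3 P4 : Vkk C k,
        [/\ Wkk_e 1 P1, Wkk_e (-1) P2, Wkk_e 'i P3, Wkk_e (- 'i) P4
          & P = P1 + P2 + P3 + P4]) /\
   (forall P1 P2 P3 P4 : Vkk C k,
      Wkk_e 1 P1 -> Wkk_e (-1) P2 -> Wkk_e 'i P3 -> Wkk_e (- 'i) P4 ->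
      Wkk (P1 + P2 + P3 + P4)) /\
   (forall P1 P2 P3 P4 : Vkk C k,
      Wkk_e 1 P1 -> Wkk_e (-1) P2 -> Wkk_e 'i P3 -> Wkk_e (- 'i) P4 ->
      P1 + P2 + P3 + P4 = 0 -> [/\ P1 = 0, P2 = 0, P3 = 0 & P4 = 0])).
Proof.
move=> {hk}.
have sqr_i : ('i : C) ^+ 2 = -1 := sqrCi C.
have two_neq0 : (2 : C) != 0 by rewrite pnatr_eq0.
have W_sigma := @Wkk_subst_eps C k.
split; [split | split; [| split]].
- exact: Wkk_slash_eps1.
- move=> Q WQ; have [P WP <-] := sigma_onto_stable (@subst_eps4 C k) W_sigma WQ.
  by exists P => //; apply/esym/subst_eps_slash.
- move=> P WP.
  have [a [b [c [d decomp]]]] :=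
    eigen_decomposition (@subst_eps4 C k) sqr_i two_neq0 (@WkkD C k) (@WkkZ C k) W_sigma WP.
  by exists a, b, c, d.
- by move=> P1 P2 P3 P4 [W1 _] [W2 _] [W3 _] [W4 _]; do 3 (apply: WkkD => //).
- rewrite /Wkk_e /Vkk_e => P1 P2 P3 P4 [_ e1] [_ e2] [_ e3] [_ e4].
  by move=> /(eigen_decomposition_unique sqr_i two_neq0 e1 e2 e3 e4).
Qed.
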